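(* Let $G$ be an abelian group and $E$ a real Banach space. Then $PJ(G;E)=\mathrm{Hom}(G;E)$.
   Context: $PJ(G;E)$ is the set of functions $f\colon G\to E$ such that there is $c>0$ with $\|f(xy)+f(xy^{-1})-2f(x)\|\le c$ for all $x,y\in G$ and $f(x^n)=nf(x)$ for all $x\in G$, $n\in\mathbb{Z}$. $\mathrm{Hom}(G;E)$ is the set of homomorphisms from $G$ to the additive group of $E$. *)

From HB Require Import structures.
From mathcomp Require Import all_boot all_order all_algebra.
From mathcomp Require Import all_classical all_reals all_analysis.
Set Implicit Arguments. Unset Strict Implicit. Unset Printing Implicit Defensive.
Import Order.TTheory GRing.Theory Num.Theory.
Import numFieldNormedType.Exports.
Local Open Scope ring_scope.

(* The abelian group G is written additively (zmodType): xy becomes x + y,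
   xy^{-1} becomes x - y, x^n becomes x *~ n. *)

Definition PJ (G : zmodType) (R : realType) (E : normedModType R)
  (f : G -> E) : Prop :=
  (exists c : R, 0 < c /\
     forall x y : G, `|f (x + y) + f (x - y) - (f x) *+ 2| <= c) /\
  (forall (x : G) (n : int), f (x *~ n) = (f x) *~ n).

Definition HomGE (G : zmodType) (R : realType) (E : normedModType R)
  (f : G -> E) : Prop :=
  forall x y : G, f (x + y) = f x + f y.

From HB Require Import structures.
From mathcomp Require Import all_boot all_order all_algebra.
From mathcomp Require Import all_classical all_reals all_analysis.
Import Order.TTheory GRing.Theory Num.Theory.
Import numFieldNormedType.Exports.
Local Open Scope ring_scope.

(* For an odd map f, twice the Cauchy defect f (a + b) - f a - f b is the sum
   of the Jensen defects at (a, b) and (b, a), so a bounded Jensen defect gives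
   a bounded Cauchy defect.  Homogeneity multiplies the Cauchy defect by n when
   a and b are replaced by n a and n b, so a bounded Cauchy defect vanishes. *)

Definition jensen_defect {G E : zmodType} (f : G -> E) (x y : G) : E :=
  f (x + y) + f (x - y) - f x *+ 2.

Definition cauchy_defect {G E : zmodType} (f : G -> E) (x y : G) : E :=
  f (x + y) - f x - f y.

Lemma ge0_natmul_bounded_eq0 {R : archiNumFieldType} (x c : R) :
  0 <= x -> (forall n, x *+ n <= c) -> x = 0.
Proof.
move=> x_ge0 x_bounded; apply/eqP/negPn/negP => x_neq0.
have x_gt0 : 0 < x by rewrite lt_def x_neq0.
have c_ge0 : 0 <= c by rewrite -(mulr0n x).
have := archi_boundP (divr_ge0 c_ge0 x_ge0).
rewrite ltr_pdivrMr // mulr_natl => /lt_le_trans/(_ (x_bounded _)).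
by rewrite ltxx.
Qed.

Section Defects.
Context {G E : zmodType}.
Variable f : G -> E.

Lemma cauchy_defect_odd : (forall x, f (- x) = - f x) ->
  forall a b, cauchy_defect f a b *+ 2 = jensen_defect f a b + jensen_defect f b a.
Proof.
move=> f_odd a b; rewrite /cauchy_defect /jensen_defect -(opprB a b) f_odd (addrC b a).
rewrite addrACA -opprD -mulrnDl addrACA subrr addr0 -mulr2n.
by rewrite -addrA -opprD mulrnBl.
Qed.

Lemma cauchy_defect_natmul : (forall x n, f (x *+ n) = f x *+ n) ->
  forall a b n, cauchy_defect f (a *+ n) (b *+ n) = cauchy_defect f a b *+ n.
Proof. by move=> f_natmul a b n; rewrite /cauchy_defect -mulrnDl !f_natmul !mulrnBl. Qed.

End Defects.

Section QuasiAdditive.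
Context {G : zmodType} {R : archiNumFieldType} {E : normedZmodType R}.
Variables (f : G -> E) (c : R).

Lemma jensen_bounded_cauchy_bounded : (forall x, f (- x) = - f x) ->
  (forall a b, `|jensen_defect f a b| <= c) -> forall a b, `|cauchy_defect f a b| <= c.
Proof.
move=> f_odd jensen_bounded a b.
rewrite -(ler_pMn2r (_ : 0 < 2)%N) // -normrMn cauchy_defect_odd // mulr2n.
by rewrite (le_trans (ler_normD _ _)) // lerD.
Qed.

Lemma natmul_homogeneous_cauchy_bounded_additive :
  (forall x n, f (x *+ n) = f x *+ n) ->
  (forall a b, `|cauchy_defect f a b| <= c) -> {morph f : x y / x + y}.
Proof.
move=> f_natmul cauchy_bounded x y; apply/eqP; rewrite -subr_eq0 opprD addrA.
rewrite -normr_eq0; apply/eqP/(ge0_natmul_bounded_eq0 _ c (normr_ge0 _)) => n.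
by rewrite -normrMn -cauchy_defect_natmul // cauchy_bounded.
Qed.

End QuasiAdditive.

Lemma PJ_HomGE (G : zmodType) (R : realType) (E : normedModType R) (f : G -> E) :
  PJ f -> HomGE f.
Proof.
move=> [[c [_ jensen_bounded]] f_homog].
have f_odd x : f (- x) = - f x by rewrite -mulrN1z f_homog mulrN1z.
have f_natmul x n : f (x *+ n) = f x *+ n by rewrite -mulrz_nat f_homog mulrz_nat.
apply: (natmul_homogeneous_cauchy_bounded_additive _ c f_natmul).
exact: jensen_bounded_cauchy_bounded.
Qed.

Lemma HomGE_PJ (G : zmodType) (R : realType) (E : normedModType R) (f : G -> E) :
  HomGE f -> PJ f.
Proof.
move=> fD; have f0 : f 0 = 0 by apply: (addrI (f 0)); rewrite -fD !addr0.
pose phi : {additive G -> E} := HB.pack f (GRing.isNmodMorphism.Build G E f (f0, fD)).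
have fB x y : f (x - y) = f x - f y := raddfB phi x y.
split; last exact: (fun x n => raddfMz phi n x).
exists 1; split=> // x y.
by rewrite fB fD mulr2n addrACA subrr addr0 subrr normr0.
Qed.

Theorem corollary2p17 (G : zmodType) (R : realType)
  (E : completeNormedModType R) (f : G -> E) :
  PJ f <-> HomGE f.
Proof. by split; [exact: PJ_HomGE | exact: HomGE_PJ]. Qed.
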